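(* Let $L$ be one of the Lie algebras $\mathcal{L}$, $\mathrm{Vir}$, $\widetilde{\mathcal{W}}$, $\mathcal{W}$ (defined in the context), with its $\mathbb{Z}$-gradation $L=\bigoplus_{i} L_i$, and for $k\in\mathbb{Z}$ put $L^{(k)}=\sum_{i\ge k}L_i$. Let $V$ be a simple $L$-module. Then the following conditions are equivalent: (a) $V$ satisfies Condition A: for every $v\in V$ there is a positive integer $n$ such that $L_i v=0$ for all $i\ge n$; (b) there exist $0\ne v\in V$ and $s\in\mathbb{N}$ such that $L^{(s)}v=0$; (c) there exists $k\in\mathbb{N}$ such that $V$ is a locally finite $L^{(k)}$-module (every $v\in V$ lies in a finite-dimensional $L^{(k)}$-submodule); (d) there exists $m\in\mathbb{N}$ such that $V$ is a locally nilpotent $L^{(m)}$-module (for every $v\in V$ there is $n\in\mathbb{N}$ with $a_1a_2\cdots a_n v=0$ for all $a_1,\dots,a_n\in L^{(m)}$).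
   Context: $\mathbb{N}$ denotes the positive integers. The twisted Heisenberg–Virasoro algebra $\mathcal{L}$ has basis $\{d_n,I_n,z_1,z_2,z_3\mid n\in\mathbb{Z}\}$ (where $d_n=t^{n+1}\frac{d}{dt}$, $I_n=t^n$) with brackets $[d_n,d_m]=(m-n)d_{m+n}+\delta_{n,-m}\frac{n^3-n}{12}z_1$, $[d_n,I_m]=mI_{m+n}+\delta_{n,-m}(n^2+n)z_2$, $[I_n,I_m]=n\delta_{n,-m}z_3$, and $z_1,z_2,z_3$ central. Its gradation is $\mathcal{L}_n=\mathbb{C}d_n+\mathbb{C}I_n$ for $n\neq0$ and $\mathcal{L}_0=\mathbb{C}d_0+\mathbb{C}I_0+\mathbb{C}z_1+\mathbb{C}z_2+\mathbb{C}z_3$. $\mathrm{Vir}$ is the subalgebra spanned by $\{d_i,z_1\mid i\in\mathbb{Z}\}$; $\widetilde{\mathcal{W}}=\mathbb{C}[t]\frac{d}{dt}+\mathbb{C}[t]$ is the subalgebra spanned by $\{d_i\,(i\ge -1),\ I_i\,(i\ge 0)\}$; $\mathcal{W}=\mathrm{Der}(\mathbb{C}[t])$ is spanned by $\{d_i\mid i\ge -1\}$. Each is graded by giving $d_i,I_i$ degree $i$ and $z_j$ degree $0$. *)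

From mathcomp Require Import all_boot all_algebra complex.
From mathcomp Require Import reals.
Set Implicit Arguments. Unset Strict Implicit. Unset Printing Implicit Defensive.
Import GRing.Theory Num.Theory.
Local Open Scope ring_scope.

(* Basis of the twisted Heisenberg-Virasoro algebra:
   Bd n = d_n, BI n = I_n, Bz1 = z_1, Bz2 = z_2, Bz3 = z_3. *)
Inductive LB : Type := Bd of int | BI of int | Bz1 | Bz2 | Bz3.

Inductive LieAlg : Type := HVir (* \mathcal{L} *) | Vir | Wtilde | Wder (* \mathcal{W} *).

Definition inL (L : LieAlg) (b : LB) : bool :=
  match L, b with
  | HVir, _ => true
  | Vir, Bd _ => true
  | Vir, Bz1 => true
  | Vir, _ => false
  | Wtilde, Bd n => (-1 <= n)%R
  | Wtilde, BI n => (0 <= n)%R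
  | Wtilde, _ => false
  | Wder, Bd n => (-1 <= n)%R
  | Wder, _ => false
  end.

Definition deg (b : LB) : int :=
  match b with Bd n => n | BI n => n | _ => 0 end.

(* An element of the Lie algebra, written as a finite formal linear
   combination  sum c_j b_j  of basis vectors. *)
Definition elt (F : fieldType) := seq (F * LB).

Definition bracket (F : fieldType) (b1 b2 : LB) : elt F :=
  match b1, b2 with
  | Bd n, Bd m => ((m - n)%:~R, Bd (n + m)) ::
                  (if n == - m then [:: ((n ^+ 3 - n)%:~R / 12%:R, Bz1)] else [::])
  | Bd n, BI m => (m%:~R, BI (m + n)) ::
                  (if n == - m then [:: ((n ^+ 2 + n)%:~R, Bz2)] else [::])
  | BI m, Bd n => (- m%:~R, BI (m + n)) ::
                  (if n == - m then [:: (- (n ^+ 2 + n)%:~R, Bz2)] else [::])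
  | BI n, BI m => if n == - m then [:: (n%:~R, Bz3)] else [::]
  | _, _ => [::]
  end.

Section Modules.
Variables (F : fieldType) (V : lmodType F) (rho : LB -> {linear V -> V}).

Definition act (a : elt F) (v : V) : V := \sum_(p <- a) p.1 *: rho p.2 v.

Definition is_rep (L : LieAlg) : Prop :=
  forall b1 b2, inL L b1 -> inL L b2 -> forall v : V,
    rho b1 (rho b2 v) - rho b2 (rho b1 v) = act (bracket F b1 b2) v.

Definition in_alg (L : LieAlg) (a : elt F) : bool := all (fun p => inL L p.2) a.
Definition in_graded (L : LieAlg) (i : int) (a : elt F) : bool :=
  all (fun p => inL L p.2 && (deg p.2 == i)) a.
Definition in_filt (L : LieAlg) (k : int) (a : elt F) : bool :=
  all (fun p => inL L p.2 && (k <= deg p.2)) a.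

Definition submodule (L : LieAlg) (W : V -> Prop) : Prop :=
  [/\ W 0, (forall x y, W x -> W y -> W (x + y)),
      (forall (c : F) x, W x -> W (c *: x)) &
      (forall a x, in_alg L a -> W x -> W (act a x))].

Definition simple_mod (L : LieAlg) : Prop :=
  (exists v : V, v != 0) /\
  forall W, submodule L W -> (forall x, W x -> x = 0) \/ (forall x, W x).

Definition in_span (s : seq V) (w : V) : Prop :=
  exists c : 'I_(size s) -> F, w = \sum_(i < size s) c i *: s`_i.

Definition condA (L : LieAlg) : Prop :=
  forall v : V, exists n : nat, (0 < n)%N /\
    forall (i : int) (a : elt F), (n%:Z <= i) -> in_graded L i a -> act a v = 0.

Definition condB (L : LieAlg) : Prop :=
  exists (v : V) (s : nat), [/\ v != 0, (0 < s)%N &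
    forall a, in_filt L s%:Z a -> act a v = 0].

Definition condC (L : LieAlg) : Prop :=
  exists k : nat, (0 < k)%N /\
    forall v : V, exists s : seq V, in_span s v /\
      forall a w, in_filt L k%:Z a -> in_span s w -> in_span s (act a w).

Definition condD (L : LieAlg) : Prop :=
  exists m : nat, (0 < m)%N /\
    forall v : V, exists n : nat, (0 < n)%N /\
      forall as_ : seq (elt F), size as_ = n -> all (in_filt L m%:Z) as_ ->
        foldr act v as_ = 0.

End Modules.

(* (a) => (b) is immediate. (d) => (b): otherwise L^(m) would move every
   nonzero vector to a nonzero one, giving arbitrarily long nonvanishing
   products.
   (b) => (a), (c), (d): let v0 <> 0 be killed by L^(s) and give a basis vector
   b the weight deg b - s + 1, which is superadditive under brackets as s >= 1.
   A word b_1 ... b_r of positive total weight kills v0: commute a letter of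
   positive weight to the right, at the cost of shorter words of no smaller
   weight. By simplicity every vector is a combination of words applied to v0
   of weight >= c for some c; L_i (i large) and L^(s) raise this bound, which
   gives (a) and (d), and (c) follows since only finitely many words survive.
   (c) => (a): on a finite-dimensional L^(k)-stable subspace containing v, the
   operators d_k, d_(k+1), ... are linearly dependent; bracketing a vanishing
   combination with some d_y removes one term, so some single d_l vanishes
   there, and then so do d_j (j > 2l) and I_j (j >= k + l), being brackets of
   d_l with elements of L^(k). *)

From HB Require Import structures.
From mathcomp Require Import all_boot all_order all_algebra complex.
From mathcomp Require Import reals.
From mathcomp Require Import zify.
From Stdlib Require Import Classical.
Set Implicit Arguments. Unset Strict Implicit. Unset Printing Implicit Defensive.
Import Order.TTheory GRing.Theory Num.Theory.
Local Open Scope ring_scope.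

Definition eqLB (a b : LB) : bool :=
  match a, b with
  | Bd n, Bd m | BI n, BI m => n == m
  | Bz1, Bz1 | Bz2, Bz2 | Bz3, Bz3 => true
  | _, _ => false
  end.

Lemma eqLBP : Equality.axiom eqLB.
Proof.
by case=> [n|n|||] [m|m|||] /=; try constructor; try apply: (iffP eqP) => [->|[]].
Qed.

HB.instance Definition _ := hasDecEq.Build LB eqLBP.

Lemma inL_Bd L n : -1 <= n -> inL L (Bd n).
Proof. by case: L. Qed.

Lemma deg_bracket (F : fieldType) b1 b2 :
  all (fun p => deg p.2 == deg b1 + deg b2) (bracket F b1 b2).
Proof.
case: b1 => [n|n|||]; case: b2 => [m|m|||] //=; rewrite ?andbT.
all: try (case: ifP => /eqP H //=; rewrite ?andbT).
all: try (apply/andP; split); apply/eqP; lia.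
Qed.

(* The terms of a bracket that leave [L] have low degree, where the integer
   coefficients vanish. *)
Lemma inL_bracket (F : fieldType) L b1 b2 : inL L b1 -> inL L b2 ->
  all (fun p => (p.1 == 0) || inL L p.2) (bracket F b1 b2).
Proof.
have cube0 (n : int) : -1 <= n <= 1 -> n ^+ 3 - n = 0.
  by move=> Hn; have [->|[->|->]] : n = -1 \/ n = 0 \/ n = 1 by lia.
have sq0 (n : int) : -1 <= n <= 0 -> n ^+ 2 + n = 0.
  by move=> Hn; have [->|->] : n = -1 \/ n = 0 by lia.
have coef0 (x : int) (P : bool) : (~~ P -> x = 0) -> (x%:~R == 0 :> F) || P.
  by case: P => [_|/(_ isT) ->]; rewrite ?orbT ?mulr0z ?eqxx.
case: L; case: b1 => [n|n|||]; case: b2 => [m|m|||] //=; rewrite ?orbT ?andbT //.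
all: try (case: ifP => /eqP Hnm //=; rewrite ?orbT ?andbT ?orbF).
all: move=> // h1 h2; rewrite -?intrN.
all: repeat (apply/andP; split).
all: try (apply: coef0 => /negP ?; lia).
all: try (rewrite cube0 ?mul0r //; lia).
all: try (rewrite sq0 //; lia).
by have -> : n = 0 by lia.
Qed.

Section Action.
Variables (F : fieldType) (V : lmodType F) (rho : LB -> {linear V -> V}).

Lemma act_nil v : act rho [::] v = 0.
Proof. by rewrite /act big_nil. Qed.

Lemma act_cons p a v : act rho (p :: a) v = p.1 *: rho p.2 v + act rho a v.
Proof. by rewrite /act big_cons. Qed.

Lemma act_seq1 b v : act rho [:: (1, b)] v = rho b v.
Proof. by rewrite act_cons act_nil addr0 scale1r. Qed.

Lemma act_is_linear a : linear (act rho a).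
Proof.
move=> c x y; rewrite /act scaler_sumr -big_split; apply: eq_bigr => p _.
by rewrite linearP scalerDr !scalerA mulrC.
Qed.

HB.instance Definition _ a :=
  GRing.isLinear.Build F V V *:%R (act rho a) (act_is_linear a).

Lemma act_vanish a v : (forall p, p \in a -> rho p.2 v = 0) -> act rho a v = 0.
Proof. by move=> H; rewrite /act big_seq big1 // => p /H ->; rewrite scaler0. Qed.

Lemma rep_commute L b x v : is_rep rho L -> inL L b -> inL L x ->
  rho b (rho x v) = rho x (rho b v) + act rho (bracket F b x) v.
Proof. by move=> Hrep Hb Hx; rewrite -(Hrep _ _ Hb Hx) addrC subrK. Qed.

Lemma rho_Bd_commutator L n m : is_rep rho L -> inL L (Bd n) -> inL L (Bd m) ->
  n != - m -> forall v, rho (Bd n) (rho (Bd m) v) - rho (Bd m) (rho (Bd n) v) =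
  (m - n)%:~R *: rho (Bd (n + m)) v.
Proof.
by move=> Hrep Hn Hm Hnm v; rewrite Hrep //= (negbTE Hnm) act_cons act_nil addr0.
Qed.

Lemma rho_BI_commutator L n m : is_rep rho L -> inL L (BI m) -> inL L (Bd n) ->
  n != - m -> forall v, rho (BI m) (rho (Bd n) v) - rho (Bd n) (rho (BI m) v) =
  - m%:~R *: rho (BI (m + n)) v.
Proof.
by move=> Hrep Hm Hn Hnm v; rewrite Hrep //= (negbTE Hnm) act_cons act_nil addr0.
Qed.

Definition word_act (u : seq LB) (v : V) : V := foldr (fun b => rho b) v u.

Lemma word_act_cat u1 u2 v : word_act (u1 ++ u2) v = word_act u1 (word_act u2 v).
Proof. exact: foldr_cat. Qed.

Lemma word_act_is_linear u : linear (word_act u).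
Proof. by move=> c x y; elim: u => //= b u ->; rewrite linearP. Qed.

HB.instance Definition _ u :=
  GRing.isLinear.Build F V V *:%R (word_act u) (word_act_is_linear u).

End Action.

Section Span.
Variables (F : fieldType) (V : lmodType F).
Implicit Types (S : seq V) (x y : V).

Lemma in_span0 S : in_span S 0.
Proof. by exists (fun _ => 0); rewrite big1 // => i _; rewrite scale0r. Qed.

Lemma in_spanD S x y : in_span S x -> in_span S y -> in_span S (x + y).
Proof.
move=> [c1 ->] [c2 ->]; exists (fun i => c1 i + c2 i).
by rewrite -big_split; apply: eq_bigr => i _; rewrite scalerDl.
Qed.

Lemma in_spanZ S a x : in_span S x -> in_span S (a *: x).
Proof.
move=> [c ->]; exists (fun i => a * c i).
by rewrite scaler_sumr; apply: eq_bigr => i _; rewrite scalerA.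
Qed.

Lemma in_span_sum S (I : Type) (r : seq I) (P : pred I) (g : I -> V) :
  (forall i, P i -> in_span S (g i)) -> in_span S (\sum_(i <- r | P i) g i).
Proof.
move=> H; elim/big_rec: _ => [|i x Pi]; first exact: in_span0.
exact/in_spanD/H.
Qed.

Lemma in_span_nth S j : (j < size S)%N -> in_span S S`_j.
Proof.
move=> Hj; exists (fun i : 'I_(size S) => ((i : nat) == j)%:R).
rewrite (bigD1 (Ordinal Hj)) //= eqxx scale1r big1 ?addr0 // => i Hi.
by rewrite (_ : _ == _ = false) ?scale0r //; apply: contraNF Hi => /eqP Hij; apply/eqP/val_inj.
Qed.

Lemma in_span_mem S x : x \in S -> in_span S x.
Proof. by move=> Hx; rewrite -(nth_index 0 Hx); apply: in_span_nth; rewrite index_mem. Qed.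

Lemma in_span_linear S (g : {linear V -> V}) :
  (forall x, x \in S -> in_span S (g x)) -> forall w, in_span S w -> in_span S (g w).
Proof.
move=> H w [c ->]; rewrite linear_sum; apply: in_span_sum => i _.
by rewrite linearZ; apply/in_spanZ/H/mem_nth.
Qed.

End Span.

Fixpoint words_upto (T : Type) (A : seq T) (n : nat) : seq (seq T) :=
  if n is n'.+1 then [::] :: [seq b :: u | b <- A, u <- words_upto A n'] else [:: [::]].

Lemma mem_words_upto (T : eqType) (A : seq T) n u :
  (u \in words_upto A n) = (size u <= n)%N && all (mem A) u.
Proof.
elim: n u => [|n IH] [|b u] //=; rewrite inE //=.
apply/allpairsP/andP => [[[x w] [/= Hx Hw [-> ->]]]|[Hsize /andP[Hb Hu]]].
  by move: Hw; rewrite IH => /andP[Hs Hw]; rewrite /= ltnS Hs Hx.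
by exists (b, u); split=> //; rewrite IH -ltnS Hsize.
Qed.

Section WeightFiltration.
Variables (F : fieldType) (V : lmodType F) (rho : LB -> {linear V -> V}) (L : LieAlg).
Hypothesis Hrep : is_rep rho L.
Variables (s : nat) (v0 : V).
Hypothesis s_gt0 : (0 < s)%N.
Hypothesis v0_killed : forall a, in_filt L s%:Z a -> act rho a v0 = 0.

Definition weight (b : LB) : int := deg b - s%:Z + 1.
Definition word_weight (u : seq LB) : int := \sum_(b <- u) weight b.

Lemma word_weight_cat u1 u2 : word_weight (u1 ++ u2) = word_weight u1 + word_weight u2.
Proof. exact: big_cat. Qed.

Lemma word_weight_cons b u : word_weight (b :: u) = weight b + word_weight u.
Proof. exact: big_cons. Qed.

Lemma weight_bracket b x :
  all (fun p => weight b + weight x <= weight p.2) (bracket F b x).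
Proof. by apply: sub_all (deg_bracket F b x) => p /eqP; rewrite /weight; lia. Qed.

Lemma rho_v0 b : inL L b -> s%:Z <= deg b -> rho b v0 = 0.
Proof. by move=> Hb Hd; rewrite -act_seq1 v0_killed //= Hb Hd. Qed.

Lemma word_act_weight_gt0 u :
  all (inL L) u -> 0 < word_weight u -> word_act rho u v0 = 0.
Proof.
move: {2}(size u) (leqnn (size u)) => n; elim: n u => [|n IHn] u.
  by case: u => // _ _; rewrite /word_weight big_nil.
move=> Hsize Hu Hpos.
have [b Hb_pos [pre [post Eu]]] : exists2 b, 0 < weight b & exists pre post, u = pre ++ b :: post.
  have /hasP[b Hbu Hb] : has (fun b => 0 < weight b) u.
    apply: contraTT Hpos => /hasPn Hneg; rewrite -leNgt /word_weight big_seq.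
    by apply: sumr_le0 => b /Hneg; rewrite -leNgt.
  by exists b; last by case/splitPr: Hbu => pre post; exists pre, post.
rewrite {}Eu in Hsize Hu Hpos *; rewrite word_act_cat /=.
elim: post pre Hsize Hu Hpos => [|x post IHpost] pre Hsize Hu Hpos.
  move: Hu; rewrite all_cat /= => /and3P[_ Hb _].
  by rewrite /= rho_v0 ?linear0 //; move: Hb_pos; rewrite /weight; lia.
move: (Hu); rewrite all_cat /= => /and4P[Hpre Hb Hx Hpost].
rewrite /= (rep_commute _ Hrep Hb Hx) linearD /=.
have -> : word_act rho pre (rho x (rho b (word_act rho post v0))) =
          word_act rho (pre ++ [:: x]) (rho b (word_act rho post v0)).
  by rewrite word_act_cat.
rewrite IHpost ?add0r -?catA //=; first last.
- by move: Hpos; rewrite !word_weight_cat !word_weight_cons; lia.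
- by rewrite all_cat /= Hpre Hx Hb Hpost.
- by move: Hsize; rewrite !size_cat /=; lia.
rewrite linear_sum big_seq big1 // => p Hp_br; rewrite linearZ /=.
have Hw := allP (weight_bracket b x) p Hp_br.
have /orP[/eqP ->|Hp] := allP (inL_bracket F Hb Hx) p Hp_br; first by rewrite scale0r.
rewrite -[word_act rho pre _]/(word_act rho pre (word_act rho (p.2 :: post) v0)).
rewrite -word_act_cat IHn ?scaler0 ?all_cat /= ?Hpre ?Hp ?Hpost //.
all: by move: Hsize Hpos Hw; rewrite !size_cat !word_weight_cat !word_weight_cons /=; lia.
Qed.

Definition weight_span (c : int) (z : V) : Prop :=
  exists ws : seq (F * seq LB),
    z = \sum_(p <- ws) p.1 *: word_act rho p.2 v0 /\
    all (fun p => all (inL L) p.2 && (c <= word_weight p.2)) ws.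

Lemma weight_span_gt0 c z : 0 < c -> weight_span c z -> z = 0.
Proof.
move=> Hc [ws [-> Hws]]; rewrite big_seq big1 // => p /(allP Hws) /andP[Hu Hw].
by rewrite word_act_weight_gt0 ?scaler0 //; apply: lt_le_trans Hw.
Qed.

Lemma weight_span_v0 : weight_span 0 v0.
Proof. by exists [:: (1, [::])]; rewrite big_seq1 scale1r /= /word_weight big_nil. Qed.

Lemma weight_span0 c : weight_span c 0.
Proof. by exists [::]; rewrite big_nil. Qed.

Lemma weight_spanD c x y :
  weight_span c x -> weight_span c y -> weight_span c (x + y).
Proof. by move=> [w1 [-> H1]] [w2 [-> H2]]; exists (w1 ++ w2); rewrite big_cat all_cat H1 H2. Qed.

Lemma weight_spanZ c a x : weight_span c x -> weight_span c (a *: x).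
Proof.
move=> [w [-> H]]; exists [seq (a * p.1, p.2) | p <- w]; rewrite all_map big_map.
by rewrite scaler_sumr; split=> //; apply: eq_bigr => p _; rewrite scalerA.
Qed.

Lemma weight_span_le (c c' : int) x : weight_span c x -> c' <= c -> weight_span c' x.
Proof.
move=> [w [-> H]] Hc; exists w; split=> //; apply: sub_all H => p /andP[-> /=].
exact: le_trans.
Qed.

Lemma weight_span_word c u x : all (inL L) u ->
  weight_span c x -> weight_span (c + word_weight u) (word_act rho u x).
Proof.
move=> Hu [w [-> H]]; exists [seq (p.1, u ++ p.2) | p <- w]; split.
  rewrite big_map linear_sum; apply: eq_bigr => p _.
  by rewrite linearZ word_act_cat.
rewrite all_map; apply: sub_all H => p /andP[Hp Hw] /=.
by rewrite all_cat Hu Hp word_weight_cat /= addrC lerD2l.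
Qed.

Lemma weight_span_rho c b x : inL L b ->
  weight_span c x -> weight_span (c + weight b) (rho b x).
Proof.
move=> Hb Hx; have := weight_span_word (u := [:: b]) _ Hx.
by rewrite /= Hb /word_weight big_seq1; apply.
Qed.

Lemma weight_span_act_filt c a x : in_filt L s%:Z a ->
  weight_span c x -> weight_span (c + 1) (act rho a x).
Proof.
move=> Ha Hx; rewrite /act big_seq; apply: big_ind => [|y z|p Hp]; first exact: weight_span0.
  exact: weight_spanD.
have /andP[Hb Hd] := allP Ha p Hp; apply/weight_spanZ/(weight_span_le (weight_span_rho Hb Hx)).
by rewrite lerD2l /weight; lia.
Qed.

Lemma weighted_submodule : submodule rho L (fun z => exists c, weight_span c z).
Proof.
have weightedD x y : (exists c, weight_span c x) -> (exists c, weight_span c y) ->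
    exists c, weight_span c (x + y).
  move=> [c1 H1] [c2 H2]; exists (Num.min c1 c2).
  apply: weight_spanD.
  - by apply: (weight_span_le H1); rewrite ge_min lexx.
  - by apply: (weight_span_le H2); rewrite ge_min lexx orbT.
split=> [|//|a x [c Hx]|a x Ha [c Hx]]; first by exists 0; apply: weight_span0.
  by exists c; apply: weight_spanZ.
rewrite /act big_seq; apply: (big_ind (fun z => exists c, weight_span c z)) => [|//|p Hp].
  by exists 0; apply: weight_span0.
have Hb := allP Ha p Hp.
by exists (c + weight p.2); apply/weight_spanZ/weight_span_rho.
Qed.

Lemma weight_span_exhaustive : v0 != 0 -> simple_mod rho L ->
  forall z, exists c, weight_span c z.
Proof.
move=> Hv0 [_ Hsimple] z; have [Hzero|//] := Hsimple _ weighted_submodule.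
by move/eqP: Hv0; case; apply: Hzero; exists 0; apply: weight_span_v0.
Qed.

Hypotheses (v0_neq0 : v0 != 0) (Hsimple : simple_mod rho L).

Lemma condA_of_killed_vector : condA rho L.
Proof.
move=> v; have [c Hc] := weight_span_exhaustive v0_neq0 Hsimple v.
exists `|s%:Z - c|%N.+1; split=> // i a Hi Ha; apply: act_vanish => p Hp.
have /andP[Hb /eqP Hd] := allP Ha p Hp.
by apply: weight_span_gt0 (weight_span_rho Hb Hc); rewrite /weight Hd; lia.
Qed.

Lemma condD_of_killed_vector : condD rho L.
Proof.
exists s; split=> // v; have [c Hc] := weight_span_exhaustive v0_neq0 Hsimple v.
exists `|c|%N.+1; split=> // as_ Hsize Has.
have : weight_span (c + (size as_)%:Z) (foldr (act rho) v as_).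
  elim: as_ Has {Hsize} => [|a as_ IH] /=; first by rewrite addr0.
  move=> /andP[Ha /IH Has]; apply: weight_span_le (weight_span_act_filt Ha Has) _.
  by rewrite -addrA lerD2l; lia.
by apply: weight_span_gt0; rewrite Hsize; lia.
Qed.

Lemma size_le_word_weight u : all (fun b => s%:Z <= deg b) u -> (size u)%:Z <= word_weight u.
Proof.
elim: u => [|b u IH] /=; first by rewrite /word_weight big_nil.
by move=> /andP[Hb /IH Hu]; rewrite word_weight_cons /weight; lia.
Qed.

Definition letters (l : nat) : seq LB :=
  let degs := [seq s%:Z + i%:Z | i <- iota 0 l] in
  [seq b <- map Bd degs ++ map BI degs | inL L b].

Lemma mem_letters l b :
  (b \in letters l) = [&& inL L b, s%:Z <= deg b & deg b < s%:Z + l%:Z].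
Proof.
have mem_degs n : (n \in [seq s%:Z + i%:Z | i <- iota 0 l]) = (s%:Z <= n < s%:Z + l%:Z).
  apply/mapP/idP => [[j] | Hn]; first by rewrite mem_iota => Hj ->; lia.
  by exists `|n - s%:Z|%N; rewrite ?mem_iota; lia.
rewrite mem_filter; case: (inL L b) => //=; rewrite mem_cat.
case: b => [n|n|||] /=; rewrite ?mem_map ?mem_degs; try by move=> ? ? [].
all: do ?case: mapP => [[? _ //]|_]; rewrite ?orbF //; lia.
Qed.

(* With l = |c|, the words of length <= l over [letters l] applied to v span a
   stable subspace: appending a letter to such a word gives either another such
   word or a word of positive weight. *)
Lemma condC_of_killed_vector : condC rho L.
Proof.
exists s; split=> // v; have [c Hc] := weight_span_exhaustive v0_neq0 Hsimple v.
pose l := `|c|%N; pose S := [seq word_act rho u v | u <- words_upto (letters l) l].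
exists S; split.
  rewrite (_ : v = word_act rho [::] v) //; apply/in_span_mem/map_f.
  by rewrite mem_words_upto.
move=> a w Ha; apply: in_span_linear => _ /mapP[u Hu ->].
rewrite /= /act big_seq; apply: in_span_sum => p Hp; apply: in_spanZ.
have /andP[Hb Hd] := allP Ha p Hp.
move: Hu; rewrite mem_words_upto => /andP[Hsize Hu].
have [/andP[Hb_letter Hu_short]|Hlong] := boolP ((p.2 \in letters l) && (size u < l)%N).
  rewrite (_ : rho _ _ = word_act rho (p.2 :: u) v) //; apply/in_span_mem/map_f.
  by rewrite mem_words_upto /= Hb_letter Hu_short.
have Hu_deg : all (fun b => inL L b && (s%:Z <= deg b)) u.
  by apply: sub_all Hu => b; rewrite /= mem_letters => /and3P[-> ->].
have Hw : (size (u : seq LB))%:Z <= word_weight u.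
  by apply: size_le_word_weight; apply: sub_all Hu_deg => b /andP[].
rewrite -[rho _ _]/(word_act rho (p.2 :: u) v).
rewrite (weight_span_gt0 _ (weight_span_word _ Hc)); first exact: in_span0.
- rewrite word_weight_cons /weight; move: Hlong; rewrite negb_and mem_letters Hb Hd /=.
  by rewrite /l; lia.
- by rewrite /= Hb; apply: sub_all Hu_deg => b /andP[].
Qed.
End WeightFiltration.

Lemma condACD_of_condB (F : fieldType) (V : lmodType F) (rho : LB -> {linear V -> V}) L :
  is_rep rho L -> simple_mod rho L -> condB rho L ->
  [/\ condA rho L, condC rho L & condD rho L].
Proof.
move=> Hrep Hsimple [v0 [s [Hv0 Hs Hkilled]]].
split.
- exact: (condA_of_killed_vector Hrep Hs Hkilled Hv0 Hsimple).
- exact: (condC_of_killed_vector Hrep Hs Hkilled Hv0 Hsimple).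
- exact: (condD_of_killed_vector Hrep Hs Hkilled Hv0 Hsimple).
Qed.

Section LocallyFinite.
Variables (F : numFieldType) (V : lmodType F) (rho : LB -> {linear V -> V}) (L : LieAlg).
Hypothesis Hrep : is_rep rho L.
Variables (S : seq V) (k : nat).
Hypothesis k_gt0 : (0 < k)%N.
Hypothesis S_stable :
  forall a w, in_filt L k%:Z a -> in_span S w -> in_span S (act rho a w).

Definition kills (g : V -> V) : Prop := forall w, in_span S w -> g w = 0.

Lemma in_span_rho b w : inL L b -> k%:Z <= deg b -> in_span S w -> in_span S (rho b w).
Proof. by move=> Hb Hd Hw; rewrite -act_seq1; apply: S_stable => //=; rewrite Hb Hd. Qed.

(* Bracketing a vanishing combination with a suitable [d_y] cancels one of its
   terms and rescales the others by nonzero integers. *)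
Lemma kills_Bd_of_combination n (c : 'I_n -> F) (b0 : int) :
  k%:Z <= b0 -> (0 < #|[set i | c i != 0%R]|)%N ->
  kills (fun w => \sum_(i < n) c i *: rho (Bd (b0 + i%:Z)) w) ->
  exists l, k%:Z <= l /\ kills (rho (Bd l)).
Proof.
move=> + /prednK; move: #|_|.-1 => m; elim: m => [|m IH] in b0 c *.
  move=> Hb0 /esym/eqP/cards1P[p Hsupp] Hkills; exists (b0 + p%:Z); split; first lia.
  move=> w Hw; have := Hkills w Hw; rewrite (bigD1 p) //= big1 ?addr0.
    have : p \in [set i | c i != 0%R] by rewrite Hsupp set11.
    by rewrite inE => Hcp /eqP; rewrite scaler_eq0 (negbTE Hcp) => /eqP.
  move=> i Hip; have : i \notin [set i | c i != 0%R] by rewrite Hsupp in_set1.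
  by rewrite inE negbK => /eqP ->; rewrite scale0r.
move=> Hb0 Hcard Hkills.
have [p Hp] : exists p, p \in [set i | c i != 0%R].
  by apply/set0Pn; rewrite -card_gt0 -Hcard.
pose y := b0 + p%:Z; pose c' i := c i * (i%:Z - p%:Z)%:~R.
apply: (IH (b0 + y) c'); first lia.
  suff -> : [set i | c' i != 0%R] = [set i | c i != 0%R] :\ p.
    by move: Hcard; rewrite (cardsD1 p) Hp => -[].
  apply/setP => i; rewrite !inE /c' mulf_eq0 intr_eq0 subr_eq0 negb_or andbC.
  by congr (_ && ~~ _); apply/eqP/eqP => [/eqP|->//]; rewrite eqz_nat => /eqP/val_inj.
move=> w Hw.
have -> : \sum_(i < n) c' i *: rho (Bd (b0 + y + i%:Z)) w =
    rho (Bd y) (\sum_(i < n) c i *: rho (Bd (b0 + i%:Z)) w) -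
    \sum_(i < n) c i *: rho (Bd (b0 + i%:Z)) (rho (Bd y) w).
  rewrite linear_sum -sumrB; apply: eq_bigr => i _.
  have Hy : inL L (Bd y) by apply: inL_Bd; lia.
  have Hi : inL L (Bd (b0 + i%:Z)) by apply: inL_Bd; lia.
  have Hyi : y != - (b0 + i%:Z) by apply/eqP; lia.
  rewrite linearZ -scalerBr (rho_Bd_commutator Hrep Hy Hi Hyi) scalerA /c'.
  by congr (_ *: rho (Bd _) w); [congr (_ * _%:~R)|]; lia.
rewrite Hkills // linear0 (Hkills (rho (Bd y) w)) ?subrr //.
by apply: in_span_rho Hw; rewrite /y /=; [apply: inL_Bd|]; lia.
Qed.

(* The [(size S)^2 + 1] operators [d_k, d_(k+1), ...] act on [span S] through
   [(size S) x (size S)] coefficient matrices, which must be linearly dependent. *)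
Lemma kills_some_Bd : exists l, k%:Z <= l /\ kills (rho (Bd l)).
Proof.
pose m := size S; pose N := (m * m).+1.
have /fin_all_exists[M HM] : forall t : 'I_N, exists Mt : 'M[F]_m, forall j : 'I_m,
    rho (Bd (k%:Z + t%:Z)) S`_j = \sum_(i < m) Mt i j *: S`_i.
  move=> t; have /fin_all_exists[cc Hcc] : forall j : 'I_m, exists cj : 'I_m -> F,
      rho (Bd (k%:Z + t%:Z)) S`_j = \sum_(i < m) cj i *: S`_i.
    by move=> j; apply: in_span_rho; [apply: inL_Bd; lia|rewrite /=; lia|apply: in_span_nth].
  by exists (\matrix_(i, j) cc j i) => j; rewrite Hcc; apply: eq_bigr => i _; rewrite mxE.
pose A : 'M[F]_(N, m * m) := \matrix_(t, q) mxvec (M t) 0 q.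
have /rowV0Pn[u /sub_kermxP Hu /rV0Pn Hu_neq0] : kermx A != 0.
  by rewrite kermx_eq0 /row_free; have := rank_leq_col A; rewrite /N; lia.
have HuM i j : \sum_(t < N) u 0 t * M t i j = 0.
  have := congr1 (fun B : 'M_(1, m * m) => B 0 (mxvec_index i j)) Hu.
  rewrite !mxE => H; rewrite -[RHS]H; apply: eq_bigr => t _.
  by rewrite /A mxE (mxvecE (M t)).
apply: (@kills_Bd_of_combination N (u 0) k%:Z) => //.
  by have [t Ht] := Hu_neq0; apply/card_gt0P; exists t; rewrite inE.
move=> _ [d ->].
under eq_bigr => t _ do rewrite linear_sum scaler_sumr.
rewrite exchange_big big1 // => j _ /=.
under eq_bigr => t _ do rewrite linearZ HM scalerA scaler_sumr.
rewrite exchange_big big1 // => i _ /=.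
under eq_bigr => t _ do rewrite scalerA mulrAC.
by rewrite -scaler_suml -mulr_suml HuM mul0r scale0r.
Qed.

Section KilledBd.
Variable l : int.
Hypotheses (Hl : k%:Z <= l) (kills_l : kills (rho (Bd l))).

Lemma kills_Bd_ge j : 2 * l + 1 <= j -> kills (rho (Bd j)).
Proof.
move=> Hj w Hw.
have Hjl : inL L (Bd (j - l)) by apply: inL_Bd; lia.
have Hl_in : inL L (Bd l) by apply: inL_Bd; lia.
have : (l - (j - l))%:~R *: rho (Bd (j - l + l)) w = 0.
  rewrite -(rho_Bd_commutator Hrep Hjl Hl_in); last by apply/eqP; lia.
  have Hw' : in_span S (rho (Bd (j - l)) w) by apply: in_span_rho Hw => //=; lia.
  by rewrite (kills_l Hw) (kills_l Hw') linear0 subrr.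
by rewrite subrK => /eqP; rewrite scaler_eq0 intr_eq0 => /orP[/eqP|/eqP //]; lia.
Qed.

Lemma kills_BI_ge j : l + k%:Z <= j -> inL L (BI j) -> kills (rho (BI j)).
Proof.
move=> Hj HI w Hw.
have Hjl : inL L (BI (j - l)) by move: HI; case: (L) => //=; lia.
have Hl_in : inL L (Bd l) by apply: inL_Bd; lia.
have : - (j - l)%:~R *: rho (BI (j - l + l)) w = 0.
  rewrite -(rho_BI_commutator Hrep Hjl Hl_in); last by apply/eqP; lia.
  have Hw' : in_span S (rho (BI (j - l)) w) by apply: in_span_rho Hw => //=; lia.
  by rewrite (kills_l Hw) (kills_l Hw') linear0 subrr.
by rewrite subrK => /eqP; rewrite scaler_eq0 oppr_eq0 intr_eq0 => /orP[/eqP|/eqP //]; lia.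
Qed.

Lemma condA_on_span v : in_span S v -> exists n : nat, (0 < n)%N /\
  forall (i : int) a, n%:Z <= i -> in_graded L i a -> act rho a v = 0.
Proof.
move=> Hv; exists (absz (2 * l + 1)); split=> [|i a Hi Ha]; first lia.
apply: act_vanish => -[c b] /(allP Ha) /andP[/= Hb /eqP Hd].
case: b Hb Hd => [j|j|||] /= Hb Hd; try lia.
- by apply: kills_Bd_ge Hv; lia.
- by apply: kills_BI_ge Hv; lia.
Qed.

End KilledBd.

End LocallyFinite.

Lemma condA_of_condC (F : numFieldType) (V : lmodType F) (rho : LB -> {linear V -> V}) L :
  is_rep rho L -> condC rho L -> condA rho L.
Proof.
move=> Hrep [k [k_gt0 Hloc]] v; have [S [Hv S_stable]] := Hloc v.
have [l [Hl kills_l]] := kills_some_Bd Hrep k_gt0 S_stable.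
exact: condA_on_span Hl kills_l v Hv.
Qed.

Section Elementary.
Variables (F : fieldType) (V : lmodType F) (rho : LB -> {linear V -> V}) (L : LieAlg).
Hypothesis Hsimple : simple_mod rho L.

Lemma condB_of_condA : condA rho L -> condB rho L.
Proof.
have [[v Hv] _] := Hsimple; move=> /(_ v)[n [n_gt0 Hn]].
exists v, n; split=> // a Ha; apply: act_vanish => p Hp.
have /andP[Hb Hd] := allP Ha p Hp.
by rewrite -act_seq1 (Hn (deg p.2)) //= Hb eqxx.
Qed.

Lemma condB_of_condD : condD rho L -> condB rho L.
Proof.
have [[v Hv] _] := Hsimple; move=> [m [m_gt0 Hnil]].
apply: NNPP => HnoB.
have Hmove w : w != 0 -> exists2 a, in_filt L m%:Z a & act rho a w != 0.
  move=> Hw; apply: NNPP => Hno; apply: HnoB; exists w, m; split=> // a Ha.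
  by have [//|Haw] := eqVneq (act rho a w) 0; case: Hno; exists a.
have Hlong t : exists as_, [/\ size as_ = t, all (in_filt L m%:Z) as_ &
    foldr (act rho) v as_ != 0].
  elim: t => [|t [as_ [Hsize Has Hnz]]]; first by exists [::].
  have [a Ha Haw] := Hmove _ Hnz.
  by exists (a :: as_); rewrite /= Hsize Ha Has.
have [n [_ Hn]] := Hnil v; have [as_ [Hsize Has Hnz]] := Hlong n.
by move/eqP: Hnz; apply; apply: Hn.
Qed.

End Elementary.

Theorem lemma1 (R : realType) (L : LieAlg) (V : lmodType R[i])
  (rho : LB -> {linear V -> V})
  (Hrep : is_rep rho L) (Hsimple : simple_mod rho L) :
  [<-> condA rho L; condB rho L; condC rho L; condD rho L].
Proof.
have condACD := condACD_of_condB Hrep Hsimple.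
tfae.
- exact: condB_of_condA.
- by case/condACD.
- by move=> /(condA_of_condC Hrep)/(condB_of_condA Hsimple)/condACD[].
- by move=> /(condB_of_condD Hsimple)/condACD[].
Qed.
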